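(* Let $\mathcal{N}$ be a closed chemical reaction network, $\{\omega^1,\dots,\omega^d\}$ a reduced basis of $\Gamma^\perp$, and $\widetilde f_\kappa$ the associated extended rate function. For a rate vector $\kappa\in\mathbb{R}_+^{\mathcal{R}}$, let $\kappa^o$, $g_{\kappa^o}$, $\delta_i$ and $E^n_{d+1}$ be as defined in the context. Then, for every $c\in\mathbb{R}^n$, $$\det(J_c(g_{\kappa^o}))=(-1)^d\det\big(J_c(\widetilde f_\kappa)-E^n_{d+1}\big).$$
   Context: A chemical reaction network $\mathcal{N}=(\mathcal{S},\mathcal{C},\mathcal{R})$ consists of a finite set of species $\mathcal{S}=\{S_1,\dots,S_n\}$, a finite set of complexes $\mathcal{C}\subset\mathbb{Z}_{\ge 0}^n$ (species $S_i$ identified with the $i$-th standard basis vector; the zero complex $0$ allowed), and a finite set of reactions $\mathcal{R}\subset\mathcal{C}\times\mathcal{C}$, written $y\to y'$, with $y\ne y'$. $\mathbb{R}_+$ denotes the positive reals. A rate vector is $\kappa=(k_{y\to y'})\in\mathbb{R}_+^{\mathcal{R}}$; the mass-action species formation rate function is $f_\kappa(c)=\sum_{y\to y'\in\mathcal{R}}k_{y\to y'}c^y(y'-y)$, $c^y=\prod_i c_i^{y_i}$, with components $f_{\kappa,i}$. The stoichiometric subspace is $\Gamma=\mathrm{span}\{y'-y:y\to y'\in\mathcal{R}\}$, $s=\dim\Gamma$, $d=n-s$; the network is closed if $\Gamma\ne\mathbb{R}^n$. A basis $\{\omega^1,\dots,\omega^d\}$ of $\Gamma^\perp$ with $\omega^i=(\lambda^i_1,\dots,\lambda^i_n)$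 is reduced if $\lambda^i_i=1$ and $\lambda^i_j=0$ for all $j\in\{1,\dots,d\}$, $j\ne i$ (species are assumed ordered so that such a basis exists). The extended rate function is $\widetilde f_\kappa(c)=(\omega^1\cdot c,\dots,\omega^d\cdot c,f_{\kappa,d+1}(c),\dots,f_{\kappa,n}(c))$; $J_c$ denotes the Jacobian at $c$. The associated fully open network $\mathcal{N}^o$ has reactions $\mathcal{R}^o=\mathcal{R}\cup\{S_i\to 0: i=1,\dots,n\}$. Let $\mathcal{O}(\mathcal{N})=\{i: S_i\to 0\notin\mathcal{R}\}$. Given $\kappa$, $\kappa^o\in\mathbb{R}_+^{\mathcal{R}^o}$ agrees with $\kappa$ on $\mathcal{R}$ and has $k_{S_i\to 0}=1$ for $i\in\mathcal{O}(\mathcal{N})$; $g_{\kappa^o}$ is the mass-action species formation rate function of $\mathcal{N}^o$ with rate vector $\kappa^o$, i.e. $g_{\kappa^o}(c)=f_\kappa(c)-(\delta_1c_1,\dots,\delta_nc_n)$ with $\delta_i=1$ if $i\in\mathcal{O}(\mathcal{N})$ and $\delta_i=0$ otherwise. $E^n_{d+1}$ is the $n\times n$ diagonal matrix with entry $\delta_i$ at position $(i,i)$ for $i=d+1,\dots,n$ and zeros elsewhere. *)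

From HB Require Import structures.
From mathcomp Require Import all_boot all_order all_algebra.
From mathcomp Require Import mpoly.
Set Implicit Arguments. Unset Strict Implicit. Unset Printing Implicit Defensive.
Import Order.TTheory GRing.Theory Num.Theory.
Local Open Scope ring_scope.

(* A reaction network with n species S_0..S_{n-1} and r reactions indexed by 'I_r.
   Reaction k is  src k -> tgt k,  complexes being monomials 'X_{1..n} (= Z_{>=0}^n). *)
Section CRN.
Variables (R : realFieldType) (n r : nat).
Variables (src tgt : 'I_r -> 'X_{1..n}).

Definition wf_network : Prop :=
  injective (fun k => (src k, tgt k)) /\ (forall k, src k != tgt k).

Definition rvec (k : 'I_r) : 'rV[R]_n :=
  \row_j ((tgt k j)%:R - (src k j)%:R).

(* stoichiometric matrix: its row space is Gamma *)
Definition stoich : 'M[R]_(r, n) := \matrix_(k, j) rvec k 0 j.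

Definition closed_network : Prop := (\rank stoich < n)%N.

Definition basis_Gamma_perp (d : nat) (W : 'M[R]_(d, n)) : Prop :=
  row_free W /\ (W == kermx stoich^T)%MS.

Definition reduced_basis (d : nat) (W : 'M[R]_(d, n)) : Prop :=
  forall (i : 'I_d) (j : 'I_n), (j < d)%N -> W i j = (i == j :> nat)%:R.

Definition fpoly (kappa : 'I_r -> R) (i : 'I_n) : {mpoly R[n]} :=
  \sum_(k < r) (kappa k * ((tgt k i)%:R - (src k i)%:R)) *: 'X_[src k].

Definition delta (i : 'I_n) : R :=
  if [exists k, (src k == U_(i)%MM) && (tgt k == 0%MM)] then 0 else 1.

Definition gpoly (kappa : 'I_r -> R) (i : 'I_n) : {mpoly R[n]} :=
  fpoly kappa i - delta i *: 'X_i.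

Definition ftilde (d : nat) (W : 'M[R]_(d, n)) (kappa : 'I_r -> R)
    (i : 'I_n) : {mpoly R[n]} :=
  oapp (fun i' : 'I_d => \sum_(j < n) W i' j *: 'X_j) (fpoly kappa i)
       (insub (nat_of_ord i)).

Definition Ematrix (d : nat) : 'M[R]_n :=
  \matrix_(i, j) (if (i == j) && (d <= i)%N then delta i else 0).

End CRN.

Definition jac (R : realFieldType) (n : nat) (F : 'I_n -> {mpoly R[n]})
    (c : 'I_n -> R) : 'M[R]_n :=
  \matrix_(i, j) (mderiv j (F i)).@[c].

From HB Require Import structures.
From mathcomp Require Import all_boot all_order all_algebra.
From mathcomp Require Import mpoly.
Import Order.TTheory GRing.Theory Num.Theory.
Local Open Scope ring_scope.

(* Write J_c(g) = J - D with J = J_c(f_kappa) and D = diag(delta). Every w in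
   Gamma^perp kills the columns of J (they lie in Gamma), and w_j = 0 whenever
   S_j -> 0 is a reaction, so W J = 0 and W D = W for the matrix W of the
   reduced basis. Hence the matrix P whose first d rows are -w^1, ..., -w^d and
   whose other rows are those of the identity satisfies
   P (J - D) = J_c(ftilde) - E^n_{d+1}. Since the basis is reduced, P is lower
   triangular with diagonal (-1, ..., -1, 1, ..., 1), so det P = (-1)^d. *)

Section PartialDerivatives.
Variables (R : realFieldType) (n : nat) (c : 'I_n -> R).

Lemma meval_mderiv_sum (I : Type) (s : seq I) (j : 'I_n)
    (F : I -> {mpoly R[n]}) :
  (mderiv j (\sum_(k <- s) F k)).@[c] = \sum_(k <- s) (mderiv j (F k)).@[c].
Proof. by rewrite [mderiv j _]raddf_sum raddf_sum. Qed.

Lemma meval_mderivZ (j : 'I_n) (a : R) (p : {mpoly R[n]}) :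
  (mderiv j (a *: p)).@[c] = a * (mderiv j p).@[c].
Proof. by rewrite mderivZ mevalZ. Qed.

Lemma meval_mderivX (j l : 'I_n) :
  (mderiv j ('X_l : {mpoly R[n]})).@[c] = (l == j)%:R.
Proof.
rewrite mderivX mevalZ mnm1E; case: eqP => [->|_]; last by rewrite mul0r.
have -> : (U_(j) - U_(j) = 0)%MM by apply/mnmP=> k; rewrite mnmBE mnm0E subnn.
by rewrite mpolyX0 meval1 mulr1.
Qed.

Lemma meval_mderiv_linear (j : 'I_n) (w : 'I_n -> R) :
  (mderiv j (\sum_(l < n) w l *: 'X_l)).@[c] = w j.
Proof.
rewrite meval_mderiv_sum (bigD1 j) //= meval_mderivZ meval_mderivX eqxx mulr1.
rewrite big1 ?addr0 // => l /negbTE ne_lj.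
by rewrite meval_mderivZ meval_mderivX ne_lj mulr0.
Qed.

End PartialDerivatives.

Section Reduction.
Context {R : comPzRingType} {n d : nat}.
Variable W : 'M[R]_(d, n).

Definition reduction_mx : 'M[R]_n :=
  \matrix_(i, j) oapp (fun i' : 'I_d => - W i' j) (i == j)%:R (insub (i : nat)).

Lemma reduction_mx_mulE (A : 'M[R]_n) (i j : 'I_n) :
  (reduction_mx *m A) i j
    = oapp (fun i' : 'I_d => - (W *m A) i' j) (A i j) (insub (i : nat)).
Proof.
rewrite mxE; under eq_bigr => l _ do rewrite mxE.
case: insubP => [i' _ _ | _] /=.
  by rewrite mxE -sumrN; apply: eq_bigr => l _; rewrite mulNr.
rewrite (bigD1 i) //= eqxx mul1r big1 ?addr0 // => l ne_li.
by rewrite eq_sym (negbTE ne_li) mul0r.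
Qed.

Lemma det_reduction_mx :
  (d <= n)%N ->
  (forall (i : 'I_d) (j : 'I_n), (j < d)%N -> W i j = (i == j :> nat)%:R) ->
  \det reduction_mx = (-1) ^+ d.
Proof.
move=> le_dn Wred; rewrite -det_tr det_trig; last first.
  apply/is_trig_mxP => i j lt_ij; rewrite !mxE.
  have ne_ji : (j == i :> nat) = false by rewrite gtn_eqF.
  case: insubP => [j' lt_jd val_j' | _] /=; last by rewrite -val_eqE ne_ji.
  by rewrite Wred ?(ltn_trans lt_ij) // val_j' ne_ji oppr0.
transitivity (\prod_(i < n) (if (i < d)%N then -1 else 1) : R).
  apply: eq_bigr => i _; rewrite !mxE.
  case: insubP => [i' lt_id val_i' | ge_id] /=.
    by rewrite lt_id Wred // val_i' eqxx.
  by rewrite (negbTE ge_id) eqxx.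
rewrite -big_mkcond /= -(big_ord_widen _ (fun _ => -1 : R) le_dn).
by rewrite prodr_const card_ord.
Qed.

End Reduction.

Section MassActionJacobians.
Variables (R : realFieldType) (n r : nat) (src tgt : 'I_r -> 'X_{1..n}).
Variables (kappa : 'I_r -> R) (c : 'I_n -> R).

Definition rate_jac : 'M[R]_(r, n) :=
  \matrix_(k, j) (kappa k * (mderiv j ('X_[src k] : {mpoly R[n]})).@[c]).

Lemma jac_fpoly :
  jac (fpoly src tgt kappa) c = (stoich R src tgt)^T *m rate_jac.
Proof.
apply/matrixP => i j; rewrite !mxE meval_mderiv_sum.
by apply: eq_bigr => k _; rewrite meval_mderivZ !mxE mulrA [_ * kappa k]mulrC.
Qed.

Lemma jac_gpoly :
  jac (gpoly src tgt kappa) c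
    = jac (fpoly src tgt kappa) c - diag_mx (\row_i delta R src tgt i).
Proof.
apply/matrixP => i j; rewrite !mxE mderivB mevalB meval_mderivZ meval_mderivX.
by rewrite mulr_natr.
Qed.

Lemma jac_ftilde (d : nat) (W : 'M[R]_(d, n)) :
  jac (ftilde src tgt W kappa) c
    = \matrix_(i, j) oapp (fun i' : 'I_d => W i' j)
                          (jac (fpoly src tgt kappa) c i j) (insub (i : nat)).
Proof.
apply/matrixP => i j; rewrite !mxE /ftilde.
by case: insubP => [i' _ _ | _] /=; rewrite ?meval_mderiv_linear ?mxE.
Qed.

End MassActionJacobians.

Section BasisOfGammaPerp.
Context {R : realFieldType} {n r d : nat} {src tgt : 'I_r -> 'X_{1..n}}.
Context {W : 'M[R]_(d, n)}.
Hypothesis basisW : basis_Gamma_perp src tgt W.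

Lemma basis_Gamma_perp_leq : (d <= n)%N.
Proof. by rewrite -(eqP basisW.1) rank_leq_col. Qed.

Lemma basis_mul_stoich_tr : W *m (stoich R src tgt)^T = 0.
Proof. by apply/sub_kermxP; case: basisW => _ /andP []. Qed.

Lemma basis_mul_jac_fpoly (kappa : 'I_r -> R) (c : 'I_n -> R) :
  W *m jac (fpoly src tgt kappa) c = 0.
Proof. by rewrite jac_fpoly mulmxA basis_mul_stoich_tr mul0mx. Qed.

Lemma row_stoich (k : 'I_r) : row k (stoich R src tgt) = rvec R src tgt k.
Proof. by apply/rowP => j; rewrite !mxE. Qed.

(* An outflow reaction [S_j -> 0] puts [- e_j] in [Gamma]. *)
Lemma basis_outflow_col0 {k : 'I_r} {j : 'I_n} :
  src k = U_(j)%MM -> tgt k = 0%MM -> col j W = 0.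
Proof.
move=> src_k tgt_k.
have rvec_k : (rvec R src tgt k)^T = - delta_mx j 0.
  apply/colP => l; rewrite !mxE src_k tgt_k mnm0E mnm1E sub0r.
  by rewrite eqxx andbT eq_sym.
apply/eqP; rewrite -oppr_eq0 colE -mulmxN -rvec_k -row_stoich tr_row colE.
by rewrite mulmxA basis_mul_stoich_tr mul0mx.
Qed.

Lemma basis_mulr_delta (a : 'I_d) (j : 'I_n) :
  W a j * delta R src tgt j = W a j.
Proof.
rewrite /delta; case: existsP => [[k /andP[/eqP src_k /eqP tgt_k]] | _];
  last by rewrite mulr1.
have := congr1 (fun M : 'M_(d, 1) => M a 0) (basis_outflow_col0 src_k tgt_k).
by rewrite !mxE mulr0 => ->.
Qed.

Lemma basis_mul_jac_gpoly (kappa : 'I_r -> R) (c : 'I_n -> R) :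
  W *m jac (gpoly src tgt kappa) c = - W.
Proof.
rewrite jac_gpoly mulmxBr basis_mul_jac_fpoly sub0r; congr (- _).
by apply/matrixP => a j; rewrite mul_mx_diag !mxE basis_mulr_delta.
Qed.

Lemma reduction_mx_mul_jac_gpoly (kappa : 'I_r -> R) (c : 'I_n -> R) :
  reduction_mx W *m jac (gpoly src tgt kappa) c
    = jac (ftilde src tgt W kappa) c - Ematrix R src tgt d.
Proof.
apply/matrixP => i j.
rewrite reduction_mx_mulE basis_mul_jac_gpoly jac_gpoly jac_ftilde !mxE.
case: insubP => [i' lt_id _ | ge_id] /=.
  by rewrite leqNgt lt_id andbF subr0 mxE opprK.
by rewrite leqNgt ge_id andbT; case: eqP.
Qed.

End BasisOfGammaPerp.

Theorem theorem7p1 (R : realFieldType) (n r : nat)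
    (src tgt : 'I_r -> 'X_{1..n}) (d : nat) (W : 'M[R]_(d, n))
    (kappa : 'I_r -> R) (c : 'I_n -> R) :
  wf_network src tgt ->
  closed_network R src tgt ->
  basis_Gamma_perp src tgt W ->
  reduced_basis W ->
  (forall k, 0 < kappa k) ->
  \det (jac (gpoly src tgt kappa) c)
    = (-1) ^+ d * \det (jac (ftilde src tgt W kappa) c - Ematrix R src tgt d).
Proof.
move=> _ _ basisW reducedW _.
rewrite -(reduction_mx_mul_jac_gpoly basisW) det_mulmx.
rewrite (det_reduction_mx W (basis_Gamma_perp_leq basisW) reducedW).
by rewrite mulrA -exprMn mulrNN mulr1 expr1n mul1r.
Qed.
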